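(* Let $f\in C^1_c(\mathbb{R})$ be real-valued. For every $\varepsilon>0$ there exist $N\in\mathbb{N}$, $c_1,\dots,c_N\in\mathbb{R}$ and $\eta_1,\dots,\eta_N\in\mathbb{C}$ with $\operatorname{Im}\eta_j>0$ such that $$\left\|f-\sum_{j=1}^Nc_j\operatorname{Im}\frac{1}{\cdot-\eta_j}\right\|_{\mathcal{L}_w}<\varepsilon.$$
   Context: $\mathcal{L}_w$ is the space of functions $f:\mathbb{R}\to\mathbb{R}$ with $\lim_{x\to-\infty}f(x)=0$ and $\|f\|_{\mathcal{L}_w}:=\sup_{x\ne y}\sqrt{1+x^2}\sqrt{1+y^2}\left|\frac{f(x)-f(y)}{x-y}\right|<\infty$; it is a normed space with this norm. Here $\operatorname{Im}\frac{1}{\cdot-\eta}$ denotes the function $x\mapsto\operatorname{Im}\frac{1}{x-\eta}$. *)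

From Stdlib Require Import Reals.
Open Scope R_scope.

Definition C1c (f : R -> R) : Prop :=
  (exists f' : R -> R,
      (forall x, derivable_pt_lim f x (f' x)) /\ continuity f') /\
  (exists K : R, forall x, K < Rabs x -> f x = 0).

(* For eta = a + i b (a, b real):
   Im (1 / (x - eta)) = Im ((x - a + i b) / ((x-a)^2 + b^2)) = b / ((x-a)^2 + b^2). *)
Definition im_inv_shift (a b : R) (x : R) : R := b / ((x - a)^2 + b^2).

Fixpoint sum_lt (N : nat) (g : nat -> R) : R :=
  match N with
  | O => 0
  | S n => sum_lt n g + g n
  end.

Definition Lw_quot (f : R -> R) (x y : R) : R :=
  sqrt (1 + x^2) * sqrt (1 + y^2) * Rabs ((f x - f y) / (x - y)).

(* ||f||_{L_w} < eps, i.e. sup_{x<>y} Lw_quot f x y < eps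
   (the supremum is <= some M < eps). *)
Definition Lw_norm_lt (f : R -> R) (eps : R) : Prop :=
  exists M, M < eps /\ forall x y, x <> y -> Lw_quot f x y <= M.

(* If [H] vanishes at infinity and [(1 + x^2) |H'(x)| <= D], then [H] is [D]-Lipschitz in the
   variable [atan x], both directly and around the circle through [+-oo]; since
   [sin (atan y - atan x) = (y - x) / (sqrt (1 + x^2) sqrt (1 + y^2))] this bounds the [L_w] norm
   of [H] by [3 D].  So it suffices to approximate [f'] in the weighted sup norm by derivatives of
   sums of Poisson kernels [b / ((x - a)^2 + b^2)].  We take the Riemann sums of the Poisson
   integral of [f] on a grid of mesh [h]: summation by parts and the midpoint rule turn the
   derivative of the sum into [f'] averaged against arctan increments, up to errors of order
   [h / b^3]; this average is close to [f'(x)] by uniform continuity near [x] and because the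
   Poisson mass far from [x] is [O(b)].  For large [|x|] both derivatives are [O(b / x^3)]. *)

From Stdlib Require Import Reals Lra Lia Psatz.
From Coquelicot Require Import Coquelicot.
Open Scope R_scope.

Lemma sum_lt_ext N u v :
  (forall j, (j < N)%nat -> u j = v j) -> sum_lt N u = sum_lt N v.
Proof.
  induction N as [|N IH]; intros H; simpl; auto.
  rewrite IH by (intros; apply H; lia). rewrite H by lia. reflexivity.
Qed.

Lemma sum_lt_sub N u v : sum_lt N u - sum_lt N v = sum_lt N (fun j => u j - v j).
Proof. induction N as [|N IH]; simpl; [ring|]. rewrite <- IH. ring. Qed.

Lemma sum_lt_scal N k u : k * sum_lt N u = sum_lt N (fun j => k * u j).
Proof. induction N as [|N IH]; simpl; [ring|]. rewrite <- IH. ring. Qed.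

Lemma sum_lt_const N k : sum_lt N (fun _ => k) = INR N * k.
Proof. induction N as [|N IH]; simpl sum_lt; [simpl; ring|]. rewrite IH, S_INR. ring. Qed.

Lemma sum_lt_le N u v :
  (forall j, (j < N)%nat -> u j <= v j) -> sum_lt N u <= sum_lt N v.
Proof.
  induction N as [|N IH]; intros H; simpl; [lra|].
  assert (sum_lt N u <= sum_lt N v) by (apply IH; intros; apply H; lia).
  assert (u N <= v N) by (apply H; lia). lra.
Qed.

Lemma Rabs_sum_lt_le N u : Rabs (sum_lt N u) <= sum_lt N (fun j => Rabs (u j)).
Proof.
  induction N as [|N IH]; simpl; [rewrite Rabs_R0; lra|].
  eapply Rle_trans; [apply Rabs_triang|]. lra.
Qed.

Lemma Rabs_sum_lt_le_const N u k :
  (forall j, (j < N)%nat -> Rabs (u j) <= k) -> Rabs (sum_lt N u) <= INR N * k.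
Proof.
  intros H. rewrite <- sum_lt_const.
  eapply Rle_trans; [apply Rabs_sum_lt_le|]. apply sum_lt_le, H.
Qed.

Lemma sum_lt_affine N k c u : sum_lt N (fun j => k + c * u j) = INR N * k + c * sum_lt N u.
Proof. induction N as [|N IH]; simpl sum_lt; [simpl; ring|]. rewrite IH, S_INR. ring. Qed.

Lemma sum_lt_telescope N u : sum_lt N (fun j => u j - u (S j)) = u 0%nat - u N.
Proof. induction N as [|N IH]; simpl; [ring|]. rewrite IH. ring. Qed.

Lemma sum_lt_by_parts N (u q : nat -> R) :
  sum_lt (S N) (fun j => u j * (q j - q (S j))) =
  u 0%nat * q 0%nat - u N * q (S N) + sum_lt N (fun j => (u (S j) - u j) * q (S j)).
Proof. induction N as [|N IH]; [simpl; ring|]. simpl in *. rewrite IH. ring. Qed.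

Lemma diff_le_of_deriv_le (F F' G G' : R -> R) u v :
  (forall x, derivable_pt_lim F x (F' x)) -> (forall x, derivable_pt_lim G x (G' x)) ->
  (forall x, F' x <= G' x) -> u <= v -> F v - F u <= G v - G u.
Proof.
  intros dF dG le uv. destruct (Req_dec u v) as [->|neq]; [lra|].
  destruct (MVT_cor2 (fun t => G t - F t) (fun t => G' t - F' t) u v) as [c [e _]];
    [lra|intros; apply derivable_pt_lim_minus; auto|].
  specialize (le c). assert (0 <= (G' c - F' c) * (v - u)) by (apply Rmult_le_pos; lra).
  lra.
Qed.

Lemma Rabs_diff_le_atan (H H' : R -> R) D u v :
  (forall x, derivable_pt_lim H x (H' x)) -> (forall x, (1 + x^2) * Rabs (H' x) <= D) ->
  u <= v -> Rabs (H v - H u) <= D * (atan v - atan u).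
Proof.
  intros dH bd uv.
  assert (bd' : forall x, Rabs (H' x) <= D * / (1 + x^2)).
  { intros x. assert (0 < 1 + x^2) by nra. specialize (bd x).
    apply (Rmult_le_reg_l (1 + x^2)); [lra|].
    replace ((1 + x^2) * (D * / (1 + x^2))) with D by (field; lra). lra. }
  assert (dA : forall x, derivable_pt_lim (fun t => D * atan t) x (D * / (1 + x^2))).
  { intros x. apply derivable_pt_lim_scal with (f := atan), derivable_pt_lim_atan. }
  assert (dA' : forall x, derivable_pt_lim (fun t => - (D * atan t)) x (- (D * / (1 + x^2)))).
  { intros x. apply derivable_pt_lim_opp with (f := fun t => D * atan t), dA. }
  apply Rabs_le; split.
  - assert (- (D * atan v) - - (D * atan u) <= H v - H u); [|lra].
    apply (diff_le_of_deriv_le (fun t => - (D * atan t)) (fun x => - (D * / (1 + x^2))) H H');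
      auto.
    intros x. specialize (bd' x). pose proof (Rle_abs (- H' x)). rewrite Rabs_Ropp in *. lra.
  - assert (H v - H u <= D * atan v - D * atan u); [|lra].
    apply (diff_le_of_deriv_le H H' (fun t => D * atan t) (fun x => D * / (1 + x^2))); auto.
    intros x. specialize (bd' x). pose proof (Rle_abs (H' x)). lra.
Qed.

Lemma atan_le_mono x y : x <= y -> atan x <= atan y.
Proof. intros h. destruct (Req_dec x y) as [->|]; [lra|]. left; apply atan_increasing; lra. Qed.

Lemma atan_le_id x : 0 <= x -> atan x <= x.
Proof.
  intros hx.
  pose proof (diff_le_of_deriv_le atan (fun t => / (1 + t^2)) id (fun _ => 1) 0 x
    derivable_pt_lim_atan derivable_pt_lim_id) as H.
  rewrite atan_0 in H. unfold id in H. enough (atan x - 0 <= x - 0) by lra.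
  apply H; [|lra]. intros t. rewrite <- Rinv_1.
  apply Rinv_le_contravar; [lra|]. pose proof (pow2_ge_0 t). lra.
Qed.

Definition vanishes_at_infinity (F : R -> R) : Prop :=
  forall e, 0 < e -> exists X, forall z, X <= Rabs z -> Rabs (F z) <= e.

(* Going from [x] to [y] through [+oo] and [-oo] instead of directly. *)
Lemma Rabs_diff_le_atan_compl (H H' : R -> R) D x y :
  (forall x, derivable_pt_lim H x (H' x)) -> (forall x, (1 + x^2) * Rabs (H' x) <= D) ->
  vanishes_at_infinity H -> x <= y -> Rabs (H y - H x) <= D * (PI - (atan y - atan x)).
Proof.
  intros dH bd van xy. apply Rle_plus_epsilon. intros e e0.
  destruct (van (e/2) ltac:(lra)) as [X HX].
  set (z := Rmax X (Rabs x + Rabs y + 1)).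
  assert (zX : X <= z) by apply Rmax_l.
  assert (zxy : Rabs x + Rabs y + 1 <= z) by apply Rmax_r.
  pose proof (Rle_abs x). pose proof (Rle_abs (-x)).
  pose proof (Rle_abs y). pose proof (Rle_abs (-y)).
  rewrite !Rabs_Ropp in *. pose proof (Rabs_pos x).
  assert (Hz : Rabs (H z) <= e/2) by (apply HX; rewrite Rabs_right; lra).
  assert (Hmz : Rabs (H (-z)) <= e/2) by (apply HX; rewrite Rabs_Ropp, Rabs_right; lra).
  assert (C1 : Rabs (H z - H y) <= D * (atan z - atan y))
    by (apply Rabs_diff_le_atan with H'; auto; lra).
  assert (C2 : Rabs (H x - H (-z)) <= D * (atan x - atan (-z)))
    by (apply Rabs_diff_le_atan with H'; auto; lra).
  rewrite atan_opp in C2. pose proof (atan_bound z).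
  assert (D0 : 0 <= D) by (specialize (bd 0); pose proof (Rabs_pos (H' 0)); nra).
  replace (H y - H x) with ((- (H z - H y) + H z) + (- H (-z) + - (H x - H (-z)))) by ring.
  pose proof (Rabs_triang (- (H z - H y)) (H z)).
  pose proof (Rabs_triang (- H (-z)) (- (H x - H (-z)))).
  eapply Rle_trans; [apply Rabs_triang|]. rewrite !Rabs_Ropp in *. nra.
Qed.

Lemma sin_ge_third t : 0 <= t <= 2 -> t / 3 <= sin t.
Proof.
  intros Ht. pose proof PI2_3_2.
  destruct (SIN t) as [Hlb _]; try lra.
  eapply Rle_trans; [|exact Hlb]. unfold sin_lb, sin_approx, sin_term. simpl sum_f_R0.
  replace (INR (Factorial.fact (2*3+1))) with 5040 by (simpl; lra).
  replace (INR (Factorial.fact (2*2+1))) with 120 by (simpl; lra).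
  replace (INR (Factorial.fact (2*1+1))) with 6 by (simpl; lra).
  replace (INR (Factorial.fact (2*0+1))) with 1 by (simpl; lra).
  simpl pow.
  assert (t * t <= 4) by nra. assert (0 <= t*t*t*t*t) by (repeat apply Rmult_le_pos; lra).
  nra.
Qed.

Lemma le_3_sin A D al : 0 <= D -> 0 <= al <= PI -> A <= D * al -> A <= D * (PI - al) ->
  A <= 3 * D * sin al.
Proof.
  intros D0 Hal H1 H2. pose proof PI2_3_2. pose proof PI_4.
  destruct (Rle_lt_dec al (PI/2)).
  - pose proof (sin_ge_third al ltac:(lra)). pose proof (sin_ge_0 al). nra.
  - rewrite <- sin_PI_x. pose proof (sin_ge_third (PI - al) ltac:(lra)).
    pose proof (sin_ge_0 (PI - al)). nra.
Qed.

Lemma sin_atan_sub x y :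
  sin (atan y - atan x) = (y - x) / (sqrt (1 + x^2) * sqrt (1 + y^2)).
Proof.
  rewrite sin_minus, sin_atan, cos_atan, sin_atan, cos_atan. unfold Rsqr.
  assert (0 < sqrt (1 + x * x)) by (apply sqrt_lt_R0; nra).
  assert (0 < sqrt (1 + y * y)) by (apply sqrt_lt_R0; nra).
  replace (x^2) with (x * x) by ring. replace (y^2) with (y * y) by ring.
  field. lra.
Qed.

Lemma Lw_quot_sym H x y : x <> y -> Lw_quot H x y = Lw_quot H y x.
Proof.
  intros n. unfold Lw_quot.
  replace ((H x - H y) / (x - y)) with ((H y - H x) / (y - x)) by (field; split; lra).
  ring.
Qed.

(* In the variable [atan x] the weight of [L_w] disappears: [sqrt (1+x^2) sqrt (1+y^2) / (y - x)]
   is [1 / sin (atan y - atan x)]. *)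
Lemma Lw_quot_le_of_deriv (H H' : R -> R) D :
  (forall x, derivable_pt_lim H x (H' x)) -> (forall x, (1 + x^2) * Rabs (H' x) <= D) ->
  vanishes_at_infinity H -> forall x y, x <> y -> Lw_quot H x y <= 3 * D.
Proof.
  intros dH bd van.
  assert (D0 : 0 <= D) by (specialize (bd 0); pose proof (Rabs_pos (H' 0)); nra).
  enough (key : forall x y, x < y -> Lw_quot H x y <= 3 * D).
  { intros x y n. destruct (Rlt_or_le x y); auto. rewrite Lw_quot_sym by auto. apply key. lra. }
  intros x y xy.
  pose proof (atan_increasing x y xy). pose proof (atan_bound x). pose proof (atan_bound y).
  assert (B : Rabs (H y - H x) <= 3 * D * sin (atan y - atan x)).
  { apply le_3_sin; [lra|lra|apply Rabs_diff_le_atan with H'; auto; lra|].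
    apply Rabs_diff_le_atan_compl with H'; auto; lra. }
  rewrite sin_atan_sub in B.
  assert (0 < sqrt (1 + x^2)) by (apply sqrt_lt_R0; nra).
  assert (0 < sqrt (1 + y^2)) by (apply sqrt_lt_R0; nra).
  unfold Lw_quot.
  replace ((H x - H y) / (x - y)) with ((H y - H x) / (y - x)) by (field; lra).
  rewrite Rabs_div, (Rabs_right (y - x)) by lra.
  set (Sx := sqrt (1 + x^2)) in *. set (Sy := sqrt (1 + y^2)) in *.
  replace (Sx * Sy * (Rabs (H y - H x) / (y - x)))
    with (Rabs (H y - H x) * (Sx * Sy / (y - x))) by (field; lra).
  replace (3 * D) with (3 * D * ((y - x) / (Sx * Sy)) * (Sx * Sy / (y - x))) by (field; lra).
  apply Rmult_le_compat_r; auto.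
  apply Rlt_le, Rdiv_lt_0_compat; nra.
Qed.

Lemma Rabs_diff_le_of_deriv_bound (F F' : R -> R) K u v :
  (forall t, derivable_pt_lim F t (F' t)) -> (forall t, Rabs (F' t) <= K) ->
  Rabs (F v - F u) <= K * Rabs (v - u).
Proof.
  intros dF bF. destruct (MVT_abs F F' u v) as [c [-> _]]; [intros; apply dF|].
  apply Rmult_le_compat_r; [apply Rabs_pos|apply bF].
Qed.

Lemma midpoint_rule (F F1 F2 : R -> R) K y h :
  (forall t, derivable_pt_lim F t (F1 t)) -> (forall t, derivable_pt_lim F1 t (F2 t)) ->
  (forall t, Rabs (F2 t) <= K) -> 0 < h ->
  Rabs (F (y + h/2) - F (y - h/2) - h * F1 y) <= K * h^2 / 2.
Proof.
  intros dF dF1 bF2 hh.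
  destruct (MVT_cor2 F F1 (y - h/2) (y + h/2)) as [c [-> hc]]; [lra|intros; apply dF|].
  replace (F1 c * (y + h/2 - (y - h/2)) - h * F1 y) with (h * (F1 c - F1 y)) by field.
  rewrite Rabs_mult, (Rabs_right h) by lra.
  pose proof (Rabs_diff_le_of_deriv_bound F1 F2 K y c dF1 bF2).
  assert (Rabs (c - y) <= h/2) by (apply Rabs_le; lra).
  assert (0 <= K) by (specialize (bF2 0); pose proof (Rabs_pos (F2 0)); lra).
  replace (K * h^2 / 2) with (h * (K * (h/2))) by field.
  apply Rmult_le_compat_l; nra.
Qed.

Lemma Rabs_div_le A B C : 0 < B -> Rabs A <= C * B -> Rabs (A / B) <= C.
Proof.
  intros hB h. rewrite Rabs_div, (Rabs_right B) by lra.
  apply Rle_div_l; lra.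
Qed.

Definition poisson (b y : R) : R := b / (y^2 + b^2).
Definition dpoisson (b y : R) : R := -2 * b * y / (y^2 + b^2)^2.
Definition d2poisson (b y : R) : R := (6 * b * y^2 - 2 * b^3) / (y^2 + b^2)^3.
Definition poisson_prim (b y : R) : R := atan (y / b).

Lemma im_inv_shift_poisson a b x : im_inv_shift a b x = poisson b (x - a).
Proof. reflexivity. Qed.

Lemma derivable_pt_lim_poisson b y : 0 < b -> derivable_pt_lim (poisson b) y (dpoisson b y).
Proof.
  intros hb. apply is_derive_Reals. unfold poisson, dpoisson.
  assert (0 < y^2 + b^2) by nra. auto_derive; [lra|field; lra].
Qed.

Lemma derivable_pt_lim_dpoisson b y : 0 < b -> derivable_pt_lim (dpoisson b) y (d2poisson b y).
Proof.
  intros hb. apply is_derive_Reals. unfold dpoisson, d2poisson.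
  assert (0 < y^2 + b^2) by nra. auto_derive; [nra|field; lra].
Qed.

Lemma derivable_pt_lim_poisson_prim b y : 0 < b ->
  derivable_pt_lim (poisson_prim b) y (poisson b y).
Proof.
  intros hb. unfold poisson_prim, poisson.
  replace (b / (y^2 + b^2)) with (/ (1 + (y/b)^2) * (/ b))
    by (assert (0 < y^2 + b^2) by nra; field; split; lra).
  apply (derivable_pt_lim_comp (fun t => t / b) atan); [|apply derivable_pt_lim_atan].
  replace (/ b) with (1 * / b) by ring.
  apply derivable_pt_lim_scal_right with (f := id), derivable_pt_lim_id.
Qed.

Lemma poisson_far b y : 0 < b -> y <> 0 -> poisson b y <= b / y^2.
Proof.
  intros hb hy. unfold poisson.
  assert (0 < y^2) by (apply pow2_gt_0; auto).
  apply Rmult_le_compat_l; [lra|]. apply Rinv_le_contravar; nra.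
Qed.

Lemma dpoisson_le b y : 0 < b -> Rabs (dpoisson b y) <= / b^2.
Proof.
  intros hb. unfold dpoisson. pose proof (pow2_ge_0 y).
  assert (0 < y^2 + b^2) by nra.
  apply Rabs_div_le; [nra|].
  replace (-2 * b * y) with (- (2 * b * y)) by ring.
  rewrite Rabs_Ropp, !Rabs_mult, (Rabs_right 2), (Rabs_right b) by lra.
  assert (2 * b * Rabs y <= y^2 + b^2).
  { rewrite <- pow2_abs. pose proof (pow2_ge_0 (Rabs y - b)). nra. }
  replace (/ b^2 * (y^2 + b^2)^2) with ((y^2 + b^2) * ((y^2 + b^2) / b^2)) by (field; lra).
  assert (1 <= (y^2 + b^2) / b^2) by (apply Rle_div_r; nra).
  pose proof (Rabs_pos y). nra.
Qed.

Lemma dpoisson_far b y : 0 < b -> y <> 0 -> Rabs (dpoisson b y) <= 2 * b / Rabs y ^ 3.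
Proof.
  intros hb hy. unfold dpoisson. pose proof (Rabs_pos_lt y hy) as ay.
  assert (0 < y^2) by (apply pow2_gt_0; auto).
  apply Rabs_div_le; [nra|].
  replace (-2 * b * y) with (- (2 * b * y)) by ring.
  rewrite Rabs_Ropp, !Rabs_mult, (Rabs_right 2), (Rabs_right b) by lra.
  rewrite <- (pow2_abs y). set (a := Rabs y) in *.
  assert (0 < a^4) by (apply pow_lt; lra).
  replace (2 * b / a^3 * (a^2 + b^2)^2) with (2 * b * a * ((a^2 + b^2)^2 / a^4)) by (field; lra).
  assert (1 <= (a^2 + b^2)^2 / a^4) by (apply Rle_div_r; nra).
  assert (0 <= 2 * b * a) by nra. nra.
Qed.

Lemma d2poisson_le b y : 0 < b -> Rabs (d2poisson b y) <= 6 / b^3.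
Proof.
  intros hb. unfold d2poisson. pose proof (pow2_ge_0 y).
  assert (0 < y^2 + b^2) by nra. assert (0 < b^3) by (apply pow_lt; lra).
  apply Rabs_div_le; [apply pow_lt; lra|].
  assert (Rabs (6 * b * y^2 - 2 * b^3) <= 6 * b * (y^2 + b^2)) by (apply Rabs_le; split; nra).
  replace (6 / b^3 * (y^2 + b^2)^3) with (6 * b * (y^2 + b^2) * ((y^2 + b^2) / b^2)^2)
    by (field; lra).
  assert (1 <= (y^2 + b^2) / b^2) by (apply Rle_div_r; nra).
  assert (1 <= ((y^2 + b^2) / b^2)^2) by nra.
  assert (0 <= 6 * b * (y^2 + b^2)) by nra. nra.
Qed.

Lemma poisson_prim_le b u v : 0 < b -> u <= v -> poisson_prim b u <= poisson_prim b v.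
Proof.
  intros hb uv. apply atan_le_mono. apply Rmult_le_compat_r; [apply Rlt_le, Rinv_0_lt_compat|]; lra.
Qed.

Lemma poisson_prim_diff_le_PI b u v : poisson_prim b v - poisson_prim b u <= PI.
Proof.
  unfold poisson_prim. pose proof (atan_bound (v / b)). pose proof (atan_bound (u / b)). lra.
Qed.

Lemma poisson_prim_diff_far b ro h y : 0 < b -> 0 < h -> h <= ro -> ro <= Rabs y ->
  poisson_prim b (y + h/2) - poisson_prim b (y - h/2) <= 4 * b * h / ro^2.
Proof.
  intros hb hh hro hy.
  destruct (MVT_cor2 (poisson_prim b) (poisson b) (y - h/2) (y + h/2)) as [z [-> hz]];
    [lra|intros; apply derivable_pt_lim_poisson_prim; auto|].
  assert (hz' : ro / 2 <= Rabs z).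
  { destruct (Rle_lt_dec 0 y).
    - rewrite Rabs_right in hy by lra. rewrite Rabs_right; lra.
    - rewrite Rabs_left in hy by lra. rewrite Rabs_left; lra. }
  assert (z <> 0) by (intros ->; rewrite Rabs_R0 in hz'; lra).
  assert (Hb : b / z^2 <= 4 * b / ro^2).
  { rewrite <- pow2_abs. replace (4 * b / ro^2) with (b / (ro/2)^2) by (field; lra).
    apply Rmult_le_compat_l; [lra|]. apply Rinv_le_contravar; [nra|]. apply pow_incr; lra. }
  pose proof (poisson_far b z hb ltac:(auto)).
  replace (y + h/2 - (y - h/2)) with h by field.
  replace (4 * b * h / ro^2) with (4 * b / ro^2 * h) by (field; lra). nra.
Qed.

Lemma derivable_pt_lim_sum_lt N (F : nat -> R -> R) (F' : nat -> R) x :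
  (forall j, (j < N)%nat -> derivable_pt_lim (F j) x (F' j)) ->
  derivable_pt_lim (fun y => sum_lt N (fun j => F j y)) x (sum_lt N F').
Proof.
  induction N as [|N IH]; intros H; simpl; [apply derivable_pt_lim_const|].
  apply (derivable_pt_lim_plus (fun y => sum_lt N (fun j => F j y)) (F N));
    [apply IH; intros; apply H|apply H]; lia.
Qed.

Lemma derivable_pt_lim_poisson_sum N c a b x : (forall j, (j < N)%nat -> 0 < b j) ->
  derivable_pt_lim (fun y => sum_lt N (fun j => c j * im_inv_shift (a j) (b j) y)) x
    (sum_lt N (fun j => c j * dpoisson (b j) (x - a j))).
Proof.
  intros hb. apply (derivable_pt_lim_sum_lt N (fun j y => c j * im_inv_shift (a j) (b j) y)).
  intros j hj. specialize (hb j hj).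
  apply is_derive_Reals. unfold im_inv_shift, dpoisson.
  assert (0 < (x - a j)^2 + b j ^2) by (pose proof (pow2_ge_0 (x - a j)); nra).
  auto_derive; [lra|field; lra].
Qed.

Lemma vanishes_at_infinity_plus F G : vanishes_at_infinity F -> vanishes_at_infinity G ->
  vanishes_at_infinity (fun x => F x + G x).
Proof.
  intros hF hG e he.
  destruct (hF (e/2) ltac:(lra)) as [X1 H1]. destruct (hG (e/2) ltac:(lra)) as [X2 H2].
  exists (Rmax X1 X2). intros z hz. pose proof (Rmax_l X1 X2). pose proof (Rmax_r X1 X2).
  specialize (H1 z ltac:(lra)). specialize (H2 z ltac:(lra)).
  eapply Rle_trans; [apply Rabs_triang|lra].
Qed.

Lemma vanishes_at_infinity_opp F : vanishes_at_infinity F -> vanishes_at_infinity (fun x => - F x).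
Proof. intros hF e he. destruct (hF e he) as [X HX]. exists X. intros. rewrite Rabs_Ropp. auto. Qed.

Lemma vanishes_at_infinity_poisson c a b : 0 < b ->
  vanishes_at_infinity (fun x => c * im_inv_shift a b x).
Proof.
  intros hb e he. set (C := (Rabs c + 1) * b / e). pose proof (Rabs_pos c).
  assert (C0 : 0 <= C) by (unfold C; apply Rdiv_le_0_compat; nra).
  exists (Rabs a + C + 1). intros z hz. rewrite im_inv_shift_poisson.
  set (u := z - a).
  assert (hu : C + 1 <= Rabs u) by (unfold u; pose proof (Rabs_triang_inv z a); lra).
  assert (u0 : u <> 0) by (intros E; rewrite E, Rabs_R0 in hu; lra).
  assert (Hu2 : Rabs u <= u^2) by (rewrite <- (pow2_abs u); nra).
  assert (0 < poisson b u) by (unfold poisson; apply Rdiv_lt_0_compat; nra).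
  assert (Hp : poisson b u * (Rabs c + 1) <= e).
  { eapply Rle_trans; [apply Rmult_le_compat_r; [lra|apply (poisson_far b u hb u0)]|].
    assert (0 < u^2) by (apply pow2_gt_0; auto).
    replace (b / u^2 * (Rabs c + 1)) with (C * e / u^2) by (unfold C; field; lra).
    apply Rle_div_l; nra. }
  rewrite Rabs_mult, (Rabs_right (poisson b u)) by lra. nra.
Qed.

Lemma vanishes_at_infinity_poisson_sum N c a b : (forall j, (j < N)%nat -> 0 < b j) ->
  vanishes_at_infinity (fun x => sum_lt N (fun j => c j * im_inv_shift (a j) (b j) x)).
Proof.
  induction N as [|N IH]; intros hb; simpl.
  - intros e he. exists 0. intros. rewrite Rabs_R0. lra.
  - apply (vanishes_at_infinity_plus
             (fun x => sum_lt N (fun j => c j * im_inv_shift (a j) (b j) x))).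
    + apply IH. intros; apply hb; lia.
    + apply vanishes_at_infinity_poisson, hb; lia.
Qed.

Lemma Rabs_div_PI_le u M : Rabs u <= M -> Rabs (u / PI) <= M.
Proof.
  intros H. pose proof PI2_3_2. pose proof (Rabs_pos u).
  apply Rabs_div_le; [lra|]. nra.
Qed.

Lemma derivable_pt_lim_zero_outside (F : R -> R) K t :
  (forall x, K <= Rabs x -> F x = 0) -> K < Rabs t -> derivable_pt_lim F t 0.
Proof.
  intros FK ht e he. exists (mkposreal (Rabs t - K) ltac:(lra)). simpl. intros d d0 hd.
  pose proof (Rabs_triang_inv t (- d)). rewrite Rabs_Ropp in *.
  rewrite !FK by (replace (t + d) with (t - - d) by ring; lra).
  replace ((0 - 0) / d - 0) with 0 by (field; auto). rewrite Rabs_R0. lra.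
Qed.

Definition mesh (L : R) (n : nat) : R := 2 * L / INR n.
Definition node (L : R) (n j : nat) : R := - L + INR j * mesh L n.

(* [poisson b / PI] is an approximate identity as [b -> 0]; these are the Riemann-sum weights of
   its convolution with [f] on the grid [node L n]. *)
Definition riemann_coef (f : R -> R) (L : R) (n j : nat) : R := mesh L n * f (node L n j) / PI.

Definition poisson_sum_deriv (f : R -> R) (L : R) (n : nat) (b x : R) : R :=
  sum_lt (S n) (fun j => riemann_coef f L n j * dpoisson b (x - node L n j)).

Section RiemannPoisson.

Variables (f f' : R -> R) (L M M1 e0 ro : R) (n : nat).
Hypothesis f_deriv : forall t, derivable_pt_lim f t (f' t).
Hypothesis L_ge1 : 1 <= L.
Hypothesis f_supp : forall t, L - 1 <= Rabs t -> f t = 0.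
Hypothesis f_bound : forall t, Rabs (f t) <= M.
Hypothesis f'_bound : forall t, Rabs (f' t) <= M1.
Hypothesis f'_unif : forall s t, Rabs (s - t) < 2 * ro -> Rabs (f' s - f' t) < e0.
Hypothesis n_pos : (1 <= n)%nat.

Local Notation h := (mesh L n).

Lemma mesh_pos : 0 < h.
Proof. apply Rdiv_lt_0_compat; [lra|apply lt_0_INR; lia]. Qed.

Lemma INR_mul_mesh : INR n * h = 2 * L.
Proof. unfold mesh. field. apply not_0_INR. lia. Qed.

Lemma node_S j : node L n (S j) = node L n j + h.
Proof. unfold node. rewrite S_INR. ring. Qed.

Lemma node_0 : node L n 0 = - L.
Proof. unfold node. simpl. ring. Qed.

Lemma node_n : node L n n = L.
Proof. unfold node. rewrite INR_mul_mesh. ring. Qed.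

Lemma node_bound j : (j <= n)%nat -> - L <= node L n j <= L.
Proof.
  intros hj. unfold node. pose proof mesh_pos. pose proof (pos_INR j).
  apply le_INR in hj. pose proof INR_mul_mesh. split; nra.
Qed.

Lemma f'_supp t : L - 1 < Rabs t -> f' t = 0.
Proof.
  intros ht. apply (uniqueness_limite f t); [apply f_deriv|].
  apply (derivable_pt_lim_zero_outside f (L - 1)); auto.
Qed.

Lemma poisson_sum_deriv_by_parts b x : 0 < b ->
  Rabs (poisson_sum_deriv f L n b x -
        sum_lt n (fun j => (f (node L n (S j)) - f (node L n j)) / PI
                           * poisson b (x - (node L n j + h / 2))))
  <= (2 * L + h) * M * (3 * h / b^3).
Proof.
  intros hb. pose proof PI_RGT_0. pose proof mesh_pos.
  set (q j := poisson b (x - node L n j + h / 2)).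
  assert (by_parts : sum_lt (S n) (fun j => f (node L n j) / PI * (q j - q (S j))) =
    sum_lt n (fun j => (f (node L n (S j)) - f (node L n j)) / PI
                       * poisson b (x - (node L n j + h / 2)))).
  { rewrite (sum_lt_by_parts n (fun j => f (node L n j) / PI) q), node_0, node_n.
    rewrite !f_supp by (rewrite ?Rabs_Ropp, Rabs_right; lra).
    replace (0 / PI * q 0%nat - 0 / PI * q (S n)) with 0 by (field; lra).
    rewrite Rplus_0_l. apply sum_lt_ext. intros j _. unfold q. rewrite node_S.
    f_equal; [field; lra|f_equal; field]. }
  rewrite <- by_parts. unfold poisson_sum_deriv. rewrite sum_lt_sub.
  replace ((2 * L + h) * M * (3 * h / b^3)) with (INR (S n) * (M * (6 / b^3 * h^2 / 2)))
    by (rewrite S_INR, <- INR_mul_mesh; field; lra).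
  apply Rabs_sum_lt_le_const. intros j _.
  set (y := x - node L n j).
  assert (Hq : q j - q (S j) = poisson b (y + h / 2) - poisson b (y - h / 2)).
  { unfold q, y. rewrite node_S. f_equal; f_equal; field. }
  rewrite Hq. unfold riemann_coef.
  replace (h * f (node L n j) / PI * dpoisson b y
           - f (node L n j) / PI * (poisson b (y + h / 2) - poisson b (y - h / 2)))
    with (- (f (node L n j) / PI)
          * (poisson b (y + h / 2) - poisson b (y - h / 2) - h * dpoisson b y))
    by (field; lra).
  rewrite Rabs_mult, Rabs_Ropp. apply Rmult_le_compat; try apply Rabs_pos.
  - apply Rabs_div_PI_le, f_bound.
  - apply (midpoint_rule (poisson b) (dpoisson b) (d2poisson b)); auto.
    + intros; apply derivable_pt_lim_poisson; auto.
    + intros; apply derivable_pt_lim_dpoisson; auto.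
    + intros; apply d2poisson_le; auto.
Qed.

Lemma e0_pos : 0 < ro -> 0 < e0.
Proof.
  intros. eapply Rle_lt_trans; [apply Rabs_pos|apply (f'_unif 0 0)].
  rewrite Rminus_0_r, Rabs_R0. lra.
Qed.

(* Near [x] the values of [f'] are close to [f' x]; far from [x] the arctan increment is small. *)
Lemma f'_deviation_estimate b d x y z : 0 < b -> 0 < d -> d <= ro -> Rabs (z - (x - y)) <= d / 2 ->
  Rabs ((f' z - f' x) * (poisson_prim b (y + d / 2) - poisson_prim b (y - d / 2)) / PI)
  <= e0 * (poisson_prim b (y + d / 2) - poisson_prim b (y - d / 2)) / PI + 8 * M1 * b * d / ro^2.
Proof.
  intros hb hd hdro hz. pose proof PI2_3_2.
  assert (invPI : 0 < / PI <= 1) by (split; [apply Rinv_0_lt_compat|rewrite <- Rinv_1;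
    apply Rinv_le_contravar]; lra).
  set (w := poisson_prim b (y + d / 2) - poisson_prim b (y - d / 2)).
  assert (w0 : 0 <= w)
    by (unfold w; pose proof (poisson_prim_le b (y - d / 2) (y + d / 2) hb ltac:(lra)); lra).
  assert (0 <= e0 * w * / PI) by (pose proof (e0_pos ltac:(lra)); repeat apply Rmult_le_pos; lra).
  assert (0 <= 8 * M1 * b * d * / ro^2).
  { pose proof (Rabs_pos (f' 0)). pose proof (f'_bound 0).
    assert (0 < / ro^2) by (apply Rinv_0_lt_compat; nra). repeat apply Rmult_le_pos; lra. }
  unfold Rdiv. rewrite !Rabs_mult, (Rabs_right w), (Rabs_right (/ PI)) by lra.
  destruct (Rlt_le_dec (Rabs y) ro) as [near|far].
  - assert (Rabs (f' z - f' x) < e0).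
    { apply f'_unif. replace (z - x) with ((z - (x - y)) - y) by ring.
      eapply Rle_lt_trans; [apply Rabs_triang|]. rewrite Rabs_Ropp. lra. }
    assert (Rabs (f' z - f' x) * w * / PI <= e0 * w * / PI); [|lra].
    apply Rmult_le_compat_r; [lra|]. apply Rmult_le_compat_r; lra.
  - assert (wfar : w <= 4 * b * d / ro^2) by (apply poisson_prim_diff_far; auto).
    assert (Rabs (f' z - f' x) <= 2 * M1).
    { unfold Rminus. eapply Rle_trans; [apply Rabs_triang|]. rewrite Rabs_Ropp.
      pose proof (f'_bound z). pose proof (f'_bound x). lra. }
    assert (Rabs (f' z - f' x) * w <= 2 * M1 * (4 * b * d / ro^2))
      by (apply Rmult_le_compat; try apply Rabs_pos; lra).
    assert (Rabs (f' z - f' x) * w * / PI <= Rabs (f' z - f' x) * w).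
    { rewrite <- (Rmult_1_r (Rabs (f' z - f' x) * w)) at 2.
      apply Rmult_le_compat_l; [pose proof (Rabs_pos (f' z - f' x)); nra|lra]. }
    replace (8 * M1 * b * d * / ro^2) with (2 * M1 * (4 * b * d / ro^2)) by (field; lra).
    lra.
Qed.

Lemma slope_poisson_estimate a d b x : 0 < b -> 0 < d -> d <= ro ->
  Rabs ((f (a + d) - f a) / PI * poisson b (x - (a + d / 2))
        - f' x * (poisson_prim b (x - a) - poisson_prim b (x - (a + d))) / PI)
  <= M1 * d^2 / (2 * b^2)
     + e0 * (poisson_prim b (x - a) - poisson_prim b (x - (a + d))) / PI
     + 8 * M1 * b * d / ro^2.
Proof.
  intros hb hd hdro. pose proof PI_RGT_0.
  destruct (MVT_cor2 f f' a (a + d)) as [z [-> hz]]; [lra|intros; apply f_deriv|].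
  set (y := x - (a + d / 2)).
  replace (x - a) with (y + d / 2) by (unfold y; field).
  replace (x - (a + d)) with (y - d / 2) by (unfold y; field).
  set (w := poisson_prim b (y + d / 2) - poisson_prim b (y - d / 2)).
  assert (mid : Rabs (w - d * poisson b y) <= / b^2 * d^2 / 2).
  { apply (midpoint_rule (poisson_prim b) (poisson b) (dpoisson b)); auto.
    - intros; apply derivable_pt_lim_poisson_prim; auto.
    - intros; apply derivable_pt_lim_poisson; auto.
    - intros; apply dpoisson_le; auto. }
  assert (first : Rabs (f' z / PI * (d * poisson b y - w)) <= M1 * d^2 / (2 * b^2)).
  { rewrite Rabs_mult, Rabs_minus_sym.
    replace (M1 * d^2 / (2 * b^2)) with (M1 * (/ b^2 * d^2 / 2)) by (field; lra).
    apply Rmult_le_compat; try apply Rabs_pos; auto. apply Rabs_div_PI_le, f'_bound. }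
  assert (second : Rabs ((f' z - f' x) * w / PI) <= e0 * w / PI + 8 * M1 * b * d / ro^2).
  { apply f'_deviation_estimate; auto. unfold y.
    replace (z - (x - (x - (a + d / 2)))) with (z - (a + d / 2)) by ring. apply Rabs_le; lra. }
  replace (f' z * (a + d - a) / PI * poisson b y - f' x * w / PI)
    with (f' z / PI * (d * poisson b y - w) + (f' z - f' x) * w / PI) by (field; lra).
  eapply Rle_trans; [apply Rabs_triang|]. lra.
Qed.

Lemma slopes_poisson_sum_estimate b x : 0 < b -> h <= ro ->
  Rabs (sum_lt n (fun j => (f (node L n (S j)) - f (node L n j)) / PI
                           * poisson b (x - (node L n j + h / 2)))
        - f' x * (poisson_prim b (x + L) - poisson_prim b (x - L)) / PI)
  <= L * M1 * h / b^2 + e0 + 16 * L * M1 * b / ro^2.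
Proof.
  intros hb hro. pose proof PI_RGT_0. pose proof mesh_pos. pose proof (e0_pos ltac:(lra)).
  set (w j := poisson_prim b (x - node L n j) - poisson_prim b (x - node L n (S j))).
  assert (W_sum : sum_lt n w = poisson_prim b (x + L) - poisson_prim b (x - L)).
  { unfold w. rewrite (sum_lt_telescope n (fun j => poisson_prim b (x - node L n j))).
    rewrite node_0, node_n.
    f_equal; f_equal; ring. }
  assert (W_bound : 0 <= sum_lt n w <= PI).
  { rewrite W_sum. split; [|apply poisson_prim_diff_le_PI].
    pose proof (poisson_prim_le b (x - L) (x + L) hb ltac:(lra)). lra. }
  rewrite <- W_sum.
  replace (f' x * sum_lt n w / PI) with (sum_lt n (fun j => f' x / PI * w j))
    by (rewrite <- sum_lt_scal; field; lra).
  rewrite sum_lt_sub. eapply Rle_trans; [apply Rabs_sum_lt_le|].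
  eapply Rle_trans.
  { apply sum_lt_le with
      (v := fun j => (M1 * h^2 / (2 * b^2) + 8 * M1 * b * h / ro^2) + e0 / PI * w j).
    intros j _. unfold w. rewrite node_S.
    eapply Rle_trans; [|right].
    - set (w' := poisson_prim b (x - node L n j) - poisson_prim b (x - (node L n j + h))).
      replace (f' x / PI * w') with (f' x * w' / PI) by (field; lra).
      apply slope_poisson_estimate; auto.
    - field. lra. }
  rewrite sum_lt_affine.
  assert (e0 / PI * sum_lt n w <= e0).
  { replace (e0 / PI * sum_lt n w) with (e0 * (sum_lt n w / PI)) by (field; lra).
    assert (sum_lt n w / PI <= 1) by (apply Rle_div_l; lra).
    assert (0 <= sum_lt n w / PI) by (apply Rdiv_le_0_compat; lra). nra. }
  replace (INR n * (M1 * h^2 / (2 * b^2) + 8 * M1 * b * h / ro^2))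
    with (INR n * h * (M1 * h / (2 * b^2) + 8 * M1 * b / ro^2)) by (field; lra).
  rewrite INR_mul_mesh.
  replace (L * M1 * h / b^2 + e0 + 16 * L * M1 * b / ro^2)
    with (2 * L * (M1 * h / (2 * b^2) + 8 * M1 * b / ro^2) + e0) by (field; lra).
  lra.
Qed.

Lemma poisson_mass_estimate b x : 0 < b ->
  Rabs (f' x * (poisson_prim b (x + L) - poisson_prim b (x - L)) / PI - f' x) <= M1 * b.
Proof.
  intros hb. pose proof PI2_3_2.
  assert (M1_0 : 0 <= M1) by (pose proof (Rabs_pos (f' 0)); pose proof (f'_bound 0); lra).
  destruct (Rlt_le_dec (L - 1) (Rabs x)) as [far|near].
  { rewrite f'_supp by auto. replace (0 * _ / PI - 0) with 0 by (field; lra).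
    rewrite Rabs_R0. nra. }
  set (W := poisson_prim b (x + L) - poisson_prim b (x - L)).
  assert (W_le : W <= PI) by apply poisson_prim_diff_le_PI.
  assert (W_ge : PI - 2 * b <= W).
  { unfold W, poisson_prim. pose proof (Rle_abs x). pose proof (Rle_abs (- x)).
    rewrite Rabs_Ropp in *.
    assert (atan (/ b) <= atan ((x + L) / b)).
    { apply atan_le_mono. replace (/ b) with (1 / b) by (field; lra).
      apply Rmult_le_compat_r; [apply Rlt_le, Rinv_0_lt_compat|]; lra. }
    assert (atan ((x - L) / b) <= atan (- / b)).
    { apply atan_le_mono. replace (- / b) with (-1 / b) by (field; lra).
      apply Rmult_le_compat_r; [apply Rlt_le, Rinv_0_lt_compat|]; lra. }
    rewrite atan_opp, atan_inv in * by lra. pose proof (atan_le_id b ltac:(lra)). lra. }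
  replace (f' x * W / PI - f' x) with (f' x * (W / PI - 1)) by (field; lra).
  rewrite Rabs_mult. apply Rmult_le_compat; try apply Rabs_pos; auto.
  rewrite Rabs_left1.
  - assert (1 - 2 * b / PI <= W / PI) by (apply Rle_div_r; [lra|]; field_simplify; lra).
    assert (2 * b / PI <= b) by (apply Rle_div_l; nra). lra.
  - assert (W / PI <= 1) by (apply Rle_div_l; lra). lra.
Qed.

Lemma poisson_sum_deriv_near b x : 0 < b -> h <= ro ->
  Rabs (f' x - poisson_sum_deriv f L n b x)
  <= (2 * L + h) * M * (3 * h / b^3) + (L * M1 * h / b^2 + e0 + 16 * L * M1 * b / ro^2) + M1 * b.
Proof.
  intros hb hro.
  pose proof (poisson_sum_deriv_by_parts b x hb) as E1.
  pose proof (slopes_poisson_sum_estimate b x hb hro) as E2.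
  pose proof (poisson_mass_estimate b x hb) as E3.
  set (G := poisson_sum_deriv f L n b x) in *.
  set (T := sum_lt n _) in *.
  set (V := f' x * _ / PI) in *.
  replace (f' x - G) with (- (G - T) + (- (T - V) + - (V - f' x))) by ring.
  eapply Rle_trans; [apply Rabs_triang|]. rewrite Rabs_Ropp.
  eapply Rle_trans; [apply Rplus_le_compat_l, Rabs_triang|]. rewrite !Rabs_Ropp. lra.
Qed.

Lemma poisson_sum_deriv_far b x : 0 < b -> h <= 1 -> 2 * L + 1 <= Rabs x ->
  (1 + x^2) * Rabs (poisson_sum_deriv f L n b x) <= 32 * (2 * L + 1) * M * b.
Proof.
  intros hb h1 hx. pose proof mesh_pos.
  assert (M0 : 0 <= M) by (pose proof (Rabs_pos (f 0)); pose proof (f_bound 0); lra).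
  remember (Rabs x) as a eqn:Ea. assert (a1 : 1 <= a) by lra.
  assert (a3 : 0 < a^3) by (apply pow_lt; lra).
  assert (sum_bound : Rabs (poisson_sum_deriv f L n b x) <= INR (S n) * (h * M * (16 * b / a^3))).
  { apply Rabs_sum_lt_le_const. intros j hj.
    rewrite Rabs_mult. apply Rmult_le_compat; try apply Rabs_pos.
    - unfold riemann_coef. pose proof PI_RGT_0.
      replace (h * f (node L n j) / PI) with (h * (f (node L n j) / PI)) by (field; lra).
      rewrite Rabs_mult, (Rabs_right h) by lra.
      apply Rmult_le_compat_l; [lra|]. apply Rabs_div_PI_le, f_bound.
    - pose proof (node_bound j ltac:(lia)).
      assert (ya : a / 2 <= Rabs (x - node L n j)).
      { pose proof (Rabs_triang_inv x (node L n j)).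
        assert (Rabs (node L n j) <= L) by (apply Rabs_le; lra). rewrite <- Ea in *. lra. }
      assert (x - node L n j <> 0) by (intros E; rewrite E, Rabs_R0 in ya; lra).
      eapply Rle_trans; [apply dpoisson_far; auto|].
      replace (16 * b / a^3) with (2 * b / (a / 2)^3) by (field; lra).
      apply Rmult_le_compat_l; [lra|]. apply Rinv_le_contravar; [apply pow_lt; lra|].
      apply pow_incr; lra. }
  rewrite S_INR in sum_bound.
  replace ((INR n + 1) * (h * M * (16 * b / a^3))) with ((INR n * h + h) * M * (16 * b / a^3))
    in sum_bound by ring.
  rewrite INR_mul_mesh in sum_bound.
  assert (0 <= M * (16 * b / a^3)) by (apply Rmult_le_pos; [lra|]; apply Rdiv_le_0_compat; lra).
  assert (sum_bound' : Rabs (poisson_sum_deriv f L n b x) <= (2 * L + 1) * (M * (16 * b / a^3))).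
  { eapply Rle_trans; [exact sum_bound|]. rewrite Rmult_assoc. apply Rmult_le_compat_r; lra. }
  rewrite <- (pow2_abs x), <- Ea.
  eapply Rle_trans; [apply Rmult_le_compat_l; [nra|exact sum_bound']|].
  replace ((1 + a^2) * ((2 * L + 1) * (M * (16 * b / a^3))))
    with ((2 * L + 1) * M * (16 * b) * ((1 + a^2) / a^3)) by (field; lra).
  replace (32 * (2 * L + 1) * M * b) with ((2 * L + 1) * M * (16 * b) * 2) by ring.
  apply Rmult_le_compat_l; [repeat apply Rmult_le_pos; lra|]. apply Rle_div_l; [lra|].
  assert (1 <= a^2) by nra. assert (a^2 <= a^3) by (simpl; nra). lra.
Qed.

End RiemannPoisson.

Lemma bounded_of_compact_support (g : R -> R) K :
  continuity g -> (forall t, K < Rabs t -> g t = 0) -> exists M, forall t, Rabs (g t) <= M.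
Proof.
  intros cg gz. set (K' := Rabs K).
  destruct (continuity_ab_maj (fun t => Rabs (g t)) (- K') K') as [m [hm _]];
    [unfold K'; pose proof (Rabs_pos K); lra|intros c _; apply (continuity_pt_comp g Rabs);
     [apply cg|apply Rcontinuity_abs]|].
  exists (Rabs (g m)). intros t. destruct (Rlt_le_dec K' (Rabs t)).
  - rewrite gz by (pose proof (Rle_abs K); unfold K' in *; lra). rewrite Rabs_R0. apply Rabs_pos.
  - apply hm. pose proof (Rle_abs t). pose proof (Rle_abs (- t)). rewrite Rabs_Ropp in *. lra.
Qed.

Lemma unif_continuity_compact_support (g : R -> R) K :
  continuity g -> (forall t, K < Rabs t -> g t = 0) ->
  forall e, 0 < e -> exists d, 0 < d /\ forall s t, Rabs (s - t) < d -> Rabs (g s - g t) < e.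
Proof.
  intros cg gz e he. set (K' := Rabs K + 1). pose proof (Rle_abs K).
  destruct (Heine g (fun c => - K' <= c <= K') (compact_P3 (- K') K') (fun x _ => cg x)
              (mkposreal e he)) as [d hd].
  exists (Rmin d 1). split; [apply Rmin_glb_lt; [apply cond_pos|lra]|].
  intros s t hst. pose proof (Rmin_l d 1). pose proof (Rmin_r d 1).
  pose proof (Rabs_triang_inv s t). pose proof (Rabs_triang_inv t s) as Hts.
  rewrite Rabs_minus_sym in Hts.
  destruct (Rle_lt_dec (Rabs s) K'), (Rle_lt_dec (Rabs t) K').
  - pose proof (Rle_abs s). pose proof (Rle_abs (- s)). pose proof (Rle_abs t).
    pose proof (Rle_abs (- t)). rewrite !Rabs_Ropp in *.
    apply (hd s t); lra.
  - rewrite !gz by (unfold K' in *; lra). rewrite Rminus_0_r, Rabs_R0. lra.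
  - rewrite !gz by (unfold K' in *; lra). rewrite Rminus_0_r, Rabs_R0. lra.
  - rewrite !gz by (unfold K' in *; lra). rewrite Rminus_0_r, Rabs_R0. lra.
Qed.

Lemma exists_pos_mul_le C e : 0 < e -> exists t, 0 < t /\ forall s, 0 <= s <= t -> C * s <= e.
Proof.
  intros he. pose proof (Rabs_pos C). exists (e / (Rabs C + 1)).
  split; [apply Rdiv_lt_0_compat; lra|]. intros s hs.
  assert (Rabs C * s <= e).
  { apply Rle_trans with (Rabs C * (e / (Rabs C + 1))); [apply Rmult_le_compat_l; lra|].
    replace (Rabs C * (e / (Rabs C + 1))) with (e * (Rabs C / (Rabs C + 1))) by (field; lra).
    assert (Rabs C / (Rabs C + 1) <= 1) by (apply Rle_div_l; lra). nra. }
  pose proof (Rle_abs C). nra.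
Qed.

Lemma exists_mesh_le L eta : 0 < L -> 0 < eta -> exists n, (1 <= n)%nat /\ mesh L n <= eta.
Proof.
  intros hL he. destruct (archimed_cor1 (eta / (2 * L))) as [n [hn n0]];
    [apply Rdiv_lt_0_compat; lra|].
  exists n. split; [lia|]. unfold mesh, Rdiv. apply Rlt_le.
  replace eta with (2 * L * (eta * / (2 * L))) by (field; lra).
  apply Rmult_lt_compat_l; lra.
Qed.

(* First [b] is chosen small for the errors of order [b], then the mesh small for those of
   order [mesh / b^3] and [mesh / b^2]. *)
Lemma exists_poisson_sum_deriv_params (f f' : R -> R) L M M1 ro e :
  (forall t, derivable_pt_lim f t (f' t)) -> 1 <= L -> (forall t, L - 1 <= Rabs t -> f t = 0) ->
  (forall t, Rabs (f t) <= M) -> (forall t, Rabs (f' t) <= M1) -> 0 < ro ->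
  (forall s t, Rabs (s - t) < 2 * ro -> Rabs (f' s - f' t) < e) ->
  exists n b, (1 <= n)%nat /\ 0 < b /\
    (forall x, Rabs (f' x - poisson_sum_deriv f L n b x) <= 3 * e) /\
    (forall x, 2 * L + 1 <= Rabs x -> (1 + x^2) * Rabs (poisson_sum_deriv f L n b x) <= e).
Proof.
  intros df L1 supp bM bM1 ro0 unif.
  assert (M0 : 0 <= M) by (pose proof (Rabs_pos (f 0)); pose proof (bM 0); lra).
  assert (M1_0 : 0 <= M1) by (pose proof (Rabs_pos (f' 0)); pose proof (bM1 0); lra).
  assert (e0 : 0 < e) by (eapply Rle_lt_trans; [apply Rabs_pos|apply (unif 0 0)];
    rewrite Rminus_0_r, Rabs_R0; lra).
  set (R := 2 * L + 1).
  destruct (exists_pos_mul_le (16 * L * M1 / ro^2 + M1 + 32 * R * M) e e0) as [b [b0 Hb]].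
  specialize (Hb b ltac:(lra)).
  assert (b_terms : 0 <= 16 * L * M1 * b / ro^2 /\ 0 <= M1 * b /\ 0 <= 32 * R * M * b).
  { assert (0 < ro^2) by nra. assert (0 <= R) by (unfold R; lra).
    repeat split; [apply Rdiv_le_0_compat| |]; repeat apply Rmult_le_pos; lra. }
  assert (b_split : (16 * L * M1 / ro^2 + M1 + 32 * R * M) * b
                    = 16 * L * M1 * b / ro^2 + M1 * b + 32 * R * M * b) by (field; lra).
  destruct (exists_pos_mul_le (3 * R * M / b^3 + L * M1 / b^2) e e0) as [eta [eta0 Heta]].
  destruct (exists_mesh_le L (Rmin 1 (Rmin ro eta))) as [n [n1 hn]];
    [lra|repeat apply Rmin_glb_lt; lra|].
  pose proof (mesh_pos L n L1 n1) as h0.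
  set (h := mesh L n) in *.
  pose proof (Rmin_l 1 (Rmin ro eta)). pose proof (Rmin_r 1 (Rmin ro eta)).
  pose proof (Rmin_l ro eta). pose proof (Rmin_r ro eta).
  assert (h1 : h <= 1) by lra. assert (hro : h <= ro) by lra.
  specialize (Heta h ltac:(lra)).
  exists n, b. split; [|split; [|split]]; auto.
  - intros x.
    pose proof (poisson_sum_deriv_near f f' L M M1 e ro n df L1 supp bM bM1 unif n1 b x b0 hro)
      as E. fold h in E.
    assert (h_terms : (2 * L + h) * M * (3 * h / b^3) + L * M1 * h / b^2
                      <= (3 * R * M / b^3 + L * M1 / b^2) * h).
    { assert (0 < b^3) by (apply pow_lt; lra). assert (0 < b^2) by nra.
      replace ((3 * R * M / b^3 + L * M1 / b^2) * h)
        with ((2 * L + 1) * M * (3 * h / b^3) + L * M1 * h / b^2) by (unfold R; field; lra).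
      apply Rplus_le_compat_r, Rmult_le_compat_r; [apply Rdiv_le_0_compat; lra|nra]. }
    lra.
  - intros x hx. eapply Rle_trans; [apply (poisson_sum_deriv_far f L M n); auto|].
    fold R. lra.
Qed.

Lemma poisson_sum_deriv_approx (f f' : R -> R) L D :
  (forall t, derivable_pt_lim f t (f' t)) -> continuity f' -> 1 <= L ->
  (forall t, L - 1 <= Rabs t -> f t = 0) -> 0 < D ->
  exists n b, (1 <= n)%nat /\ 0 < b /\
    forall x, (1 + x^2) * Rabs (f' x - poisson_sum_deriv f L n b x) <= D.
Proof.
  intros df cf' L1 supp D0.
  pose proof (f'_supp f f' L df supp) as supp'.
  destruct (bounded_of_compact_support f (L - 1)) as [M bM].
  { intros x. apply derivable_continuous_pt. exists (f' x). apply df. }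
  { intros t ht. apply supp. lra. }
  destruct (bounded_of_compact_support f' (L - 1) cf' supp') as [M1 bM1].
  set (R := 2 * L + 1). set (e := D / (3 * (1 + R^2))).
  assert (e0 : 0 < e) by (apply Rdiv_lt_0_compat; nra).
  destruct (unif_continuity_compact_support f' (L - 1) cf' supp' e e0) as [d [d0 unif]].
  destruct (exists_poisson_sum_deriv_params f f' L M M1 (d / 2) e df L1 supp bM bM1)
    as [n [b [n1 [b0 [near far]]]]]; [lra|intros s t; replace (2 * (d / 2)) with d by field; auto|].
  exists n, b. split; [|split]; auto. intros x.
  destruct (Rle_lt_dec (Rabs x) R) as [hx|hx].
  - assert (x^2 <= R^2) by (rewrite <- (pow2_abs x); apply pow_incr; split; [apply Rabs_pos|lra]).
    replace D with ((1 + R^2) * (3 * e)) by (unfold e; field; nra).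
    apply Rmult_le_compat; [nra|apply Rabs_pos|lra|apply near].
  - rewrite supp' by (unfold R in hx; lra). rewrite Rminus_0_l, Rabs_Ropp.
    assert (e <= D) by (apply Rle_div_l; pose proof (pow2_ge_0 R); nra).
    eapply Rle_trans; [apply far; unfold R in hx; lra|lra].
Qed.

Theorem lemma5p3 (f : R -> R) (hf : C1c f) (eps : R) (heps : 0 < eps) :
  exists (N : nat) (c a b : nat -> R),
    (forall j, (j < N)%nat -> 0 < b j) /\
    Lw_norm_lt (fun x => f x - sum_lt N (fun j => c j * im_inv_shift (a j) (b j) x)) eps.
Proof.
  destruct hf as [[f' [df cf']] [K hK]].
  set (L := Rabs K + 2).
  assert (L1 : 1 <= L) by (pose proof (Rabs_pos K); unfold L; lra).
  assert (supp : forall t, L - 1 <= Rabs t -> f t = 0)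
    by (intros t ht; apply hK; pose proof (Rle_abs K); unfold L in ht; lra).
  destruct (poisson_sum_deriv_approx f f' L (eps / 4) df cf' L1 supp) as [n [b [n1 [b0 approx]]]];
    [lra|].
  exists (S n), (riemann_coef f L n), (node L n), (fun _ => b).
  split; [auto|]. exists (3 * (eps / 4)). split; [lra|].
  apply (Lw_quot_le_of_deriv _ (fun x => f' x - poisson_sum_deriv f L n b x)); auto.
  - intros x. apply derivable_pt_lim_minus; [apply df|].
    apply derivable_pt_lim_poisson_sum. auto.
  - apply vanishes_at_infinity_plus.
    + intros e he. exists L. intros z hz. rewrite supp, Rabs_R0 by lra. lra.
    + apply vanishes_at_infinity_opp, vanishes_at_infinity_poisson_sum. auto.
Qed.
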